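(* Let $\mathcal X\subseteq\mathbb R^d$ be an input space, $\mathcal Y=\{1,\dots,C\}$ a finite label set, and $S:\mathcal X\times\mathcal Y\to\mathbb R$ a (non-conformity) score function. Let $(X,Y)\sim\mathcal P_{X,Y}$, and let $\epsilon\sim\mathcal P_\epsilon$ be a perturbation supported on $\mathcal E_r=\{\epsilon:\|\epsilon\|_2\le r\}$, independent of $(X,Y)$; write $Z=(X,Y,\epsilon)$ and $\widetilde X=X+\epsilon$. Fix $\alpha\in(0,1)$ and $s\in[0,\alpha]$, and set $\alpha^*_{\mathrm{aPR}}=1-\frac{1-\alpha}{1-\alpha+s}$. For $\tilde\alpha\in[0,1)$ define the robust quantile $$Q^{\mathrm{rob}}(X,Y;\tilde\alpha)=\min\{t:\ \mathbb P_\epsilon\{S(X+\epsilon,Y)\le t\}\ge 1-\tilde\alpha\},$$ and the threshold $$\tau^{\mathrm{aPR}}(\alpha;s)=\min\{t:\ \mathbb P_{X,Y}\{Q^{\mathrm{rob}}(X,Y;\alpha^*_{\mathrm{aPR}})\le t\}\ge 1-\alpha+s\}.$$ Let $\mathcal C^{\mathrm{aPR}}(\widetilde X)=\{y\in\mathcal Y: S(\widetilde X,y)\le \tau^{\mathrm{aPR}}(\alpha;s)\}$. Then $$\mathbb P_{X,Y,\epsilon}\{Y\in \mathcal C^{\mathrm{aPR}}(X+\epsilon)\}\ge 1-\alpha,$$ i.e. $\mathcal C^{\mathrm{aPR}}$ provides $(1-\alpha)$-probabilistically robust coverage.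
   Context: A prediction set map $\mathcal C$ provides $(1-\alpha)$-probabilistically robust coverage if $\mathbb P_{X,Y,\epsilon}\{Y\in\mathcal C(X+\epsilon)\}\ge 1-\alpha$, where the probability is over the joint distribution of $(X,Y)$ and the independent perturbation $\epsilon$. The quantities $Q^{\mathrm{rob}}$ and $\tau^{\mathrm{aPR}}$ are the (population) quantiles defined in the claim, assumed well-defined (finite). *)

From HB Require Import structures.
From mathcomp Require Import all_boot all_order all_algebra.
From mathcomp Require Import all_classical all_reals all_analysis.
Set Implicit Arguments. Unset Strict Implicit. Unset Printing Implicit Defensive.
Import Order.TTheory GRing.Theory Num.Theory.
Local Open Scope classical_set_scope.
Local Open Scope ring_scope.

(* Euclidean space R^d, represented as d.-tuple R with its library product
   (= Borel) sigma-algebra generated by the coordinate projections. *)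
Definition vadd (R : realType) (d : nat) (x e : d.-tuple R) : d.-tuple R :=
  [tuple tnth x i + tnth e i | i < d].

Definition l2norm (R : realType) (d : nat) (e : d.-tuple R) : R :=
  Num.sqrt (\sum_(i < d) tnth e i ^+ 2).

(* A nonempty finite label set with K.+1 elements, represented as 'I_K.+1,
   with the discrete sigma-algebra.  (The paper's Y = {1,...,C} with C >= 1
   corresponds to K = C - 1.) *)
Definition label (K : nat) : Type := 'I_K.+1.
HB.instance Definition _ K := Choice.on (label K).
HB.instance Definition _ K := isPointed.Build (label K) ord0.
HB.instance Definition _ K := @isMeasurable.Build default_measure_display
  (label K) discrete_measurable discrete_measurable0
  discrete_measurableC discrete_measurableU.

Local Open Scope ereal_scope.

Definition alpha_aPR (R : realType) (alpha s : R) : R :=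
  (1 - (1 - alpha) / (1 - alpha + s))%R.

(* Robust quantile Q^rob(x, y; a) = min { t : P_eps{ S(x + eps, y) <= t } >= 1 - a }
   (written as an infimum; it is a minimum whenever the set is nonempty). *)
Definition Qrob (R : realType) (d K : nat) (Peps : probability (d.-tuple R) R)
    (S : d.-tuple R -> label K -> R) (x : d.-tuple R) (y : label K) (a : R) : R :=
  inf [set t : R | ((1 - a)%:E <= Peps [set e | (S (vadd x e) y <= t)%R])].

Definition tau_aPR (R : realType) (d K : nat)
    (PXY : probability (d.-tuple R * label K)%type R) (Peps : probability (d.-tuple R) R)
    (S : d.-tuple R -> label K -> R) (alpha s : R) : R :=
  inf [set t : R | ((1 - alpha + s)%:E <=
     PXY [set xy | (Qrob Peps S xy.1 xy.2 (alpha_aPR alpha s) <= t)%R])].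

Definition C_aPR (R : realType) (d K : nat)
    (PXY : probability (d.-tuple R * label K)%type R) (Peps : probability (d.-tuple R) R)
    (S : d.-tuple R -> label K -> R) (alpha s : R) (xt : d.-tuple R) : set (label K) :=
  [set y | (S xt y <= tau_aPR PXY Peps S alpha s)%R].

(* Write a = alpha*_aPR.  For every (x, y) the set of levels t with
   P_eps{S(x + eps, y) <= t} >= 1 - a is an up-ray containing its infimum: it is
   bounded below because these sublevel masses tend to 0 as t -> -oo, and closed
   because they are right continuous.  Hence
   Q^rob(x, y; a) <= t iff P_eps{S(x + eps, y) <= t} >= 1 - a, and likewise tau^aPR
   is attained: P_{X,Y}{Q^rob(X, Y; a) <= tau^aPR} >= 1 - alpha + s.  On that event the
   conditional coverage over eps is at least 1 - a, so integrating the eps-sections of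
   the coverage event against P_{X,Y} bounds its product measure below by
   (1 - a)(1 - alpha + s) = 1 - alpha. *)

From HB Require Import structures.
From mathcomp Require Import all_boot all_order all_algebra.
From mathcomp Require Import all_classical all_reals all_analysis.
From mathcomp Require Import measurable_realfun lra.
Set Implicit Arguments. Unset Strict Implicit. Unset Printing Implicit Defensive.
Import Order.TTheory GRing.Theory Num.Theory.
Local Open Scope classical_set_scope.
Local Open Scope ring_scope.

Lemma measurable_sublevel d (T : measurableType d) (R : realType) (g : T -> R) t :
  measurable_fun setT g -> measurable [set x | g x <= t].
Proof.
by move=> mg; rewrite -[X in measurable X]setTI -preimage_itvNyc; exact: mg.
Qed.

Lemma mu_bigcap_ge d (T : measurableType d) (R : realType)
    (mu : {finite_measure set T -> \bar R}) (F : (set T)^nat) (c : \bar R) :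
  (forall n, measurable (F n)) -> nonincreasing_seq F ->
  (forall n, (c <= mu (F n))%E) -> (c <= mu (\bigcap_n F n))%E.
Proof.
move=> mF niF cF.
have muF0 : (mu (F 0%N) < +oo)%E by rewrite ltey_eq fin_num_measure.
have mFcap : measurable (\bigcap_n F n) by exact: bigcapT_measurable.
have mu_cvg := nonincreasing_cvg_mu muF0 mF mFcap niF.
rewrite -(cvg_lim _ mu_cvg) //; apply: lime_ge; last exact: nearW.
by apply/cvg_ex; exists (mu (\bigcap_n F n)).
Qed.

(* [Qrob] and [tau_aPR] are both of the form [inf (quantile_set mu g c)]. *)
Definition quantile_set d (T : measurableType d) (R : realType)
    (mu : set T -> \bar R) (g : T -> R) (c : R) : set R :=
  [set t | (c%:E <= mu [set x | (g x <= t)%R])%E].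

Section quantile_set.
Context d (T : measurableType d) (R : realType) (mu : {finite_measure set T -> \bar R}).
Variables (g : T -> R) (c : R).
Hypothesis mg : forall t, measurable [set x | g x <= t].
Local Notation U := (quantile_set mu g c).

Lemma quantile_set_upclosed t t' : U t -> t <= t' -> U t'.
Proof.
move=> Ut tt'; apply: (le_trans Ut); apply: le_measure; rewrite ?inE //.
by move=> x /= /le_trans; apply.
Qed.

Lemma quantile_set_bigcap (b : R^nat) :
  nonincreasing_seq b -> (forall n, U (b n)) ->
  (c%:E <= mu (\bigcap_n [set x | (g x <= b n)%R]))%E.
Proof.
move=> b_ni Ub; apply: mu_bigcap_ge => // m n mn.
by apply/subsetPset => x /= /le_trans; apply; exact: b_ni.
Qed.

Hypothesis c_gt0 : 0 < c.

Lemma quantile_set_lbound : has_lbound U.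
Proof.
(* Otherwise every [{g <= -n}] has mass at least [c > 0], yet they decrease
   to the empty set. *)
apply/not_existsP => noLB.
have Ub n : U (- n%:R).
  have /existsNP[u /not_implyP[Uu /negP]] := noLB (- n%:R).
  by rewrite -ltNge => /ltW; exact: quantile_set_upclosed.
have b_ni : nonincreasing_seq (fun n : nat => - n%:R : R).
  by move=> m n mn; rewrite lerN2 ler_nat.
have := quantile_set_bigcap b_ni Ub.
have -> : \bigcap_n [set x | g x <= - n%:R] = set0.
  apply/seteqP; split => // x /= gx.
  have := gx (Num.truncn (- g x)).+1 I; have := truncnS_gt (- g x); rewrite /=; lra.
by rewrite measure0 lee_fin leNgt c_gt0.
Qed.

Lemma quantile_set_inf : U !=set0 -> U (inf U).
Proof.
(* Right continuity: the sets [{g <= inf U + 1/(n+1)}] decrease to [{g <= inf U}]. *)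
move=> U0; have hasU : has_inf U by split; [exact: U0 | exact: quantile_set_lbound].
pose b n := inf U + n.+1%:R^-1.
have Ub n : U (b n).
  have n_gt0 : 0 < n.+1%:R^-1 :> R by rewrite invr_gt0 ltr0Sn.
  have [u Uu ult] := inf_adherent n_gt0 hasU.
  exact: quantile_set_upclosed Uu (ltW ult).
have b_ni : nonincreasing_seq b.
  by move=> m n mn; rewrite lerD2l lef_pV2 ?ler_nat ?posrE ?ltr0Sn.
have := quantile_set_bigcap b_ni Ub.
suff -> : \bigcap_n [set x | g x <= b n] = [set x | g x <= inf U] by [].
apply/seteqP; split => x /= gx.
  rewrite leNgt; apply/negP => /ltr_add_invr[k gxk].
  by have := gx k I; rewrite /= leNgt gxk.
by move=> n _; rewrite /= (le_trans gx) // lerDl invr_ge0.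
Qed.

Lemma le_inf_quantile_set (t : R) : U !=set0 -> inf U <= t <-> U t.
Proof.
move=> U0; split => [|Ut]; first exact: quantile_set_upclosed (quantile_set_inf U0).
exact: (ge_inf quantile_set_lbound Ut).
Qed.

End quantile_set.

Lemma product_measure1_ge d1 d2 (T1 : measurableType d1) (T2 : measurableType d2)
    (R : realType) (m1 : {measure set T1 -> \bar R})
    (m2 : {sigma_finite_measure set T2 -> \bar R})
    (A : set (T1 * T2)) (L : set T1) (c : R) :
  measurable A -> measurable L -> 0 <= c ->
  (forall x, L x -> c%:E <= m2 (xsection A x))%E ->
  (c%:E * m1 L <= (m1 \x m2) A)%E.
Proof.
move=> mA mL c_ge0 cA.
have m_indic : measurable_fun setT (fun x => (\1_L x : R)%:E).
  by apply/measurable_EFinP; exact: measurable_indic.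
rewrite -[L in m1 L]setIT -integral_indic // -ge0_integralZl_EFin //.
apply: ge0_le_integral => //.
- by move=> x _; rewrite mule_ge0 ?lee_fin.
- exact: emeasurable_funM.
- exact: measurable_fun_xsection.
move=> x _; rewrite /indic; have [Lx|_] := boolP (x \in L).
  by rewrite mule1; apply: cA; rewrite -inE.
by rewrite mule0.
Qed.

Lemma measurable_fun_vadd d' (T : measurableType d') (R : realType) (d : nat)
    (f g : T -> d.-tuple R) :
  measurable_fun setT f -> measurable_fun setT g ->
  measurable_fun setT (fun x => vadd (f x) (g x)).
Proof.
move=> mf mg; apply/measurable_fun_tnthP => i.
rewrite (_ : _ \o _ = fun x => tnth (f x) i + tnth (g x) i); last first.
  by apply/funext => x /=; rewrite tnth_mktuple.
by apply: measurable_funD; apply: measurableT_comp (measurable_tnth i) _.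
Qed.

Section robust_quantile.
Context (R : realType) (d K : nat) (Peps : probability (d.-tuple R) R)
  (S : d.-tuple R -> label K -> R).
Hypothesis mS : measurable_fun setT (fun xy : d.-tuple R * label K => S xy.1 xy.2).

Lemma measurable_perturbed_score :
  measurable_fun setT (fun z : (d.-tuple R * label K) * d.-tuple R =>
    S (vadd z.1.1 z.2) z.1.2).
Proof.
pose perturb (z : (d.-tuple R * label K) * d.-tuple R) := (vadd z.1.1 z.2, z.1.2).
apply: (measurableT_comp (f := fun xy => S xy.1 xy.2) (g := perturb) mS).
apply: measurable_fun_pair; last exact: measurableT_comp measurable_snd measurable_fst.
exact: measurable_fun_vadd (measurableT_comp measurable_fst measurable_fst) measurable_snd.
Qed.

Variable a : R.
Hypothesis a_lt1 : a < 1.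
Hypothesis Qrob_fin : forall x y, exists t,
  ((1 - a)%:E <= Peps [set e | (S (vadd x e) y <= t)%R])%E.

Lemma le_Qrob x y t :
  Qrob Peps S x y a <= t <-> ((1 - a)%:E <= Peps [set e | (S (vadd x e) y <= t)%R])%E.
Proof.
apply: le_inf_quantile_set; [move=> u | by rewrite subr_gt0 | exact: Qrob_fin].
apply: measurable_sublevel.
exact: measurable_fun_pair2 (x, y) measurable_perturbed_score.
Qed.

Lemma measurable_Qrob_sublevel t :
  measurable [set xy : d.-tuple R * label K | Qrob Peps S xy.1 xy.2 a <= t].
Proof.
pose A := [set z : (d.-tuple R * label K) * d.-tuple R | S (vadd z.1.1 z.2) z.1.2 <= t].
rewrite -[X in measurable X]setTI
  (_ : [set xy | _] = [set xy | (1 - a)%:E <= Peps (xsection A xy)]%E).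
  apply/emeasurable_fun_c_infty/measurable_fun_xsection => //.
  exact: measurable_sublevel measurable_perturbed_score.
by apply/seteqP; split => xy; rewrite /= xsectionE => /le_Qrob.
Qed.

End robust_quantile.

Theorem theorem1 (R : realType) (d K : nat)
    (PXY : probability (d.-tuple R * label K)%type R)
    (Peps : probability (d.-tuple R) R)
    (S : d.-tuple R -> label K -> R) (r alpha s : R) :
  measurable_fun setT (fun xy : d.-tuple R * label K => S xy.1 xy.2) ->
  0 <= r ->
  Peps [set e | l2norm e <= r] = 1%E ->
  0 < alpha < 1 ->
  0 <= s <= alpha ->
  (* Q^rob(x, y; alpha*_aPR) is well defined (finite) for every (x, y) *)
  (forall x y, exists t : R,
     ((1 - alpha_aPR alpha s)%:E <= Peps [set e | (S (vadd x e) y <= t)%R])%E) ->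
  (* tau^aPR(alpha; s) is well defined (finite) *)
  (exists t : R, ((1 - alpha + s)%:E <=
     PXY [set xy | (Qrob Peps S xy.1 xy.2 (alpha_aPR alpha s) <= t)%R])%E) ->
  ((1 - alpha)%:E <=
     (PXY \x Peps)%E [set z | C_aPR PXY Peps S alpha s (vadd z.1.1 z.2) z.1.2])%E.
Proof.
move=> mS _ _ /andP[alpha_gt0 alpha_lt1] /andP[s_ge0 _] Qrob_fin tau_fin.
set a := alpha_aPR alpha s; set c2 := 1 - alpha + s.
have c2_gt0 : 0 < c2 by rewrite /c2; lra.
have one_sub_aE : 1 - a = (1 - alpha) / c2 by rewrite /a /alpha_aPR subKr.
have one_sub_a_gt0 : 0 < 1 - a by rewrite one_sub_aE divr_gt0 // subr_gt0.
have a_lt1 : a < 1 by rewrite -subr_gt0.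
have mQ := measurable_Qrob_sublevel mS a_lt1 Qrob_fin.
have tau_mass := quantile_set_inf mQ c2_gt0 tau_fin.
rewrite -(divfK (lt0r_neq0 c2_gt0) (1 - alpha)) -one_sub_aE EFinM.
apply: le_trans (lee_wpmul2l _ tau_mass) _; first by rewrite lee_fin ltW.
apply: product_measure1_ge (ltW one_sub_a_gt0) _.
- exact: measurable_sublevel (measurable_perturbed_score mS).
- exact: mQ.
by move=> xy /(le_Qrob mS a_lt1 Qrob_fin); rewrite xsectionE.
Qed.
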